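(* Let $S(A)=(a_n)$ be a regular Stanley sequence with shift index $\sigma=\sigma(A)$ and core $(a'_n)$, and let $\alpha$ be the constant such that $a'_{2^k}=\alpha\cdot 3^k$ for all large $k$ (such $\alpha$ exists since the core is independent). Then there exists a constant $\beta$ such that $a_{2^k-\sigma}=\alpha\cdot 3^k+\beta\cdot 2^k$ for all sufficiently large $k$.
   Context: A set of non-negative integers is 3-free if no three of its elements form an arithmetic progression. For a finite 3-free set $A=\{a_0<\cdots<a_k\}$ of non-negative integers, the Stanley sequence $S(A)=(a_n)_{n\ge0}$ is the increasing sequence with initial terms $a_0,\ldots,a_k$ in which each subsequent $a_{n+1}$ is the smallest integer greater than $a_n$ such that $\{a_0,\ldots,a_{n+1}\}$ is 3-free. Throughout, Stanley sequences are in root position ($a_0=0$). A Stanley sequence $(a_n)$ is independent with character $\lambda$ if for all sufficiently large $k$: $a_{2^k+i}=a_{2^k}+a_i$ for $0\le i<2^k$, and $a_{2^k}=2a_{2^k-1}-\lambda+1$. A Stanley sequence $(a_n)$ is regular if there exist constants $\lambda,\sigma$ and an independent Stanley sequence $(a'_n)$ of character $\lambda$ such that for all large $k$ and $0\le i<2^k$: $a_{2^k-\sigma+i}=a_{2^k-\sigma}+a'_i$ and $a_{2^k-\sigma}=2a_{2^k-\sigma-1}-\lambda+1$; these data are unique, and $\sigma$ is called the shift index and $(a'_n)$ the core. *)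

From mathcomp Require Import all_boot all_order all_algebra.
Set Implicit Arguments. Unset Strict Implicit. Unset Printing Implicit Defensive.
Import Order.TTheory GRing.Theory Num.Theory.

Definition free3_prefix (a : nat -> nat) (n : nat) : Prop :=
  forall i j l, i < j -> j < l -> l <= n -> a i + a l <> 2 * a j.

Definition ext_at (a : nat -> nat) (n m : nat) : nat -> nat :=
  fun i => if i == n.+1 then m else a i.

(* a is a Stanley sequence S(A) in root position (a 0 = 0), where
   A = {a 0 < ... < a k} is a finite 3-free set, and each subsequent term
   a (n+1) (n >= k) is the least integer > a n keeping {a 0,...,a (n+1)} 3-free. *)
Definition stanley_seq (a : nat -> nat) : Prop :=
  a 0 = 0 /\ (forall n, a n < a n.+1) /\
  exists k, free3_prefix a k /\
    forall n, k <= n ->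
      free3_prefix a n.+1 /\
      forall m, a n < m -> m < a n.+1 -> ~ free3_prefix (ext_at a n m) n.+1.

Local Open Scope ring_scope.

(* The index 2^k - sigma, as a natural number (meaningful for large k). *)
Definition shidx (k : nat) (sigma : int) : nat := `|(2 ^ k)%N%:Z - sigma|%N.

Definition independent (a : nat -> nat) (lambda : int) : Prop :=
  stanley_seq a /\
  exists K : nat, forall k : nat, (K <= k)%N ->
    (forall i : nat, (i < 2 ^ k)%N -> a (2 ^ k + i)%N = (a (2 ^ k)%N + a i)%N) /\
    (a (2 ^ k)%N)%:Z = 2 * (a (2 ^ k)%N.-1)%:Z - lambda + 1.

Definition regular_data (a : nat -> nat) (lambda sigma : int) (a' : nat -> nat)
  : Prop :=
  stanley_seq a /\ independent a' lambda /\
  exists K : nat, forall k : nat, (K <= k)%N ->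
    (2 ^ k)%N%:Z - sigma - 1 >= 0 /\
    (forall i : nat, (i < 2 ^ k)%N ->
       a (shidx k sigma + i)%N = (a (shidx k sigma) + a' i)%N) /\
    (a (shidx k sigma))%:Z = 2 * (a (shidx k sigma).-1)%:Z - lambda + 1.

(* Write x k := a (2^k - sigma). Extending the block [2^k - sigma, 2^(k+1) - sigma) by the core
   and then applying the doubling rule at 2^(k+1) - sigma, the character lambda cancels against
   the one of the core at 2^k, so x (k+1) = 2 x k + a' (2^k) = 2 x k + alpha 3^k for large k.
   Hence x k - alpha 3^k doubles at each step, i.e. it is beta 2^k. *)
From mathcomp Require Import all_boot all_order all_algebra.
From mathcomp Require Import zify ring.
Import Order.TTheory GRing.Theory Num.Theory.
Local Open Scope ring_scope.

Lemma shidxS_pred (k : nat) (sigma : int) :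
  (2 ^ k)%N%:Z - sigma - 1 >= 0 ->
  (shidx k.+1 sigma).-1 = (shidx k sigma + (2 ^ k).-1)%N.
Proof.
rewrite /shidx expnS => sigma_small.
have : (0 < 2 ^ k)%N by rewrite expn_gt0.
lia.
Qed.

Lemma regular_shidxS (a : nat -> nat) (lambda sigma : int) (a' : nat -> nat) :
  regular_data a lambda sigma a' ->
  exists K : nat, forall k : nat, (K <= k)%N ->
    a (shidx k.+1 sigma) = (2 * a (shidx k sigma) + a' (2 ^ k))%N.
Proof.
move=> [_ [[_ [K1 core]] [K2 reg]]]; exists (K1 + K2)%N => k le_k.
have [sigma_small [block _]] := reg k ltac:(lia).
have [_ [_ doubling]] := reg k.+1 ltac:(lia).
have [_ core_doubling] := core k ltac:(lia).
have pos2k : (0 < 2 ^ k)%N by rewrite expn_gt0.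
rewrite shidxS_pred // block in doubling; last by lia.
lia.
Qed.

Lemma eventually_geometric {F : fieldType} {y : nat -> F} {c : F} {K : nat} :
  c != 0 -> (forall k : nat, (K <= k)%N -> y k.+1 = c * y k) ->
  forall k : nat, (K <= k)%N -> y k = y K / c ^+ K * c ^+ k.
Proof.
move=> c_neq0 yS k /subnK <-; elim: (k - K)%N => [|n IH].
  by rewrite add0n mulfVK // expf_neq0.
by rewrite addSn yS ?leq_addl // IH exprS mulrCA.
Qed.

Theorem mainTheorem8 (a : nat -> nat) (lambda sigma : int) (a' : nat -> nat)
  (alpha : rat) :
  regular_data a lambda sigma a' ->
  (exists K : nat, forall k : nat, (K <= k)%N ->
     (a' (2 ^ k)%N)%:R = alpha * 3%:R ^+ k) ->
  exists beta : rat, exists K : nat, forall k : nat, (K <= k)%N ->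
    (a (shidx k sigma))%:R = alpha * 3%:R ^+ k + beta * 2%:R ^+ k.
Proof.
move=> /regular_shidxS [K1 recurrence] [K2 core_growth].
pose y k : rat := (a (shidx k sigma))%:R - alpha * 3%:R ^+ k.
have yS k : (K1 + K2 <= k)%N -> y k.+1 = 2%:R * y k.
  move=> le_k; rewrite /y recurrence; last by lia.
  rewrite natrD natrM core_growth; last by lia.
  by rewrite exprS; ring.
exists (y (K1 + K2)%N / 2%:R ^+ (K1 + K2)), (K1 + K2)%N => k le_k.
rewrite -(eventually_geometric _ yS _ le_k) // /y; ring.
Qed.
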